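(* Let $\{S_1,\dots,S_N\}$ be an IFS of contracting similitudes of $\mathbb R^d$, ordered by $1\prec2\prec\cdots\prec N$. Then it is a linear IFS if and only if $S_{i+1}(\mathrm{Fix}(S_1))=S_i(\mathrm{Fix}(S_N))$ for all $i=1,\dots,N-1$, where $\mathrm{Fix}(S)$ denotes the unique fixed point of $S$.
   Context: Let $K$ be the invariant set of the IFS, i.e. the unique nonempty compact set with $K=\bigcup_{j=1}^N S_j(K)$. For a word $i_1\dots i_m\in\{1,\dots,N\}^m$ write $S_{i_1\dots i_m}=S_{i_1}\circ\cdots\circ S_{i_m}$. Order the words of length $m$ lexicographically (with $1\prec\cdots\prec N$); two words of length $m$ are adjacent if they are consecutive in this order. The ordered IFS is a linear IFS if $S_\omega(K)\cap S_\gamma(K)\neq\emptyset$ for every $m\ge1$ and every pair of adjacent words $\omega,\gamma$ of length $m$. *)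

From mathcomp Require Import ssreflect ssrfun ssrbool eqtype ssrnat seq fintype bigop.
From Stdlib Require Import Reals.
Set Implicit Arguments. Unset Strict Implicit. Unset Printing Implicit Defensive.

Definition Rd (d : nat) := 'I_d -> R.

Definition dist (d : nat) (x y : Rd d) : R :=
  sqrt (\big[Rplus/0%R]_(i < d) ((x i - y i) * (x i - y i))%R).

Definition contracting_similitude (d : nat) (S : Rd d -> Rd d) : Prop :=
  exists r : R, (0 < r < 1)%R /\ forall x y, dist (S x) (S y) = (r * dist x y)%R.

Definition compact (d : nat) (K : Rd d -> Prop) : Prop :=
  forall u : nat -> Rd d, (forall n, K (u n)) ->
    exists phi : nat -> nat, (forall n, (phi n < phi n.+1)%N) /\
    exists l, K l /\
      forall eps : R, (0 < eps)%R -> exists n0 : nat,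
        forall n, (n0 <= n)%N -> (dist (u (phi n)) l < eps)%R.

Definition invariant_set (d N : nat) (S : nat -> Rd d -> Rd d) (K : Rd d -> Prop) : Prop :=
  (exists x, K x) /\ compact K /\
  forall x, K x <-> exists j, (j < N)%N /\ exists y, K y /\ x = S j y.

(* Words over the alphabet {0,...,N-1} (0-based; letter i stands for i+1
   of the paper) of length m. *)
Definition word (N m : nat) (w : seq nat) : Prop :=
  size w = m /\ all (fun i => (i < N)%N) w.

Definition Sw (d : nat) (S : nat -> Rd d -> Rd d) (w : seq nat) : Rd d -> Rd d :=
  foldr (fun i (f : Rd d -> Rd d) => fun x => S i (f x)) (fun x : Rd d => x) w.

Fixpoint lexlt (w g : seq nat) : bool :=
  match w, g with
  | a :: w', b :: g' => (a < b)%N || ((a == b) && lexlt w' g')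
  | _, _ => false
  end.

Definition adjacent (N m : nat) (w g : seq nat) : Prop :=
  word N m w /\ word N m g /\ lexlt w g /\
  ~ (exists h, word N m h /\ lexlt w h /\ lexlt h g).

Definition linear_IFS (d N : nat) (S : nat -> Rd d -> Rd d) (K : Rd d -> Prop) : Prop :=
  forall m : nat, (1 <= m)%N -> forall w g : seq nat, adjacent N m w g ->
    exists x : Rd d, (exists y, K y /\ x = Sw S w y) /\ (exists z, K z /\ x = Sw S g z).

(* Two adjacent words of the same length have the form u i (N-1)^k and
   u (i+1) 0^k (letters are 0-based).  If S_{i+1}(p1) = S_i(pN), where p1 and
   pN are the fixed points of S_0 and S_{N-1} and lie in K, then
   S_u S_i(pN) = S_u S_{i+1}(p1) is a common point of the two pieces.
   Conversely, since K is bounded, S_0^k(K) shrinks to p1 and S_{N-1}^k(K) to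
   pN; the pieces of the adjacent words i (N-1)^k and (i+1) 0^k meet for every
   k, so S_i(pN) and S_{i+1}(p1) are arbitrarily close, hence equal. *)

From Pilot Require Import Defs.
From Stdlib Require Import Reals Lra Classical IndefiniteDescription FunctionalExtensionality.
From HB Require Import structures.
From mathcomp Require Import ssreflect ssrfun ssrbool eqtype ssrnat seq fintype bigop.

Set Implicit Arguments.
Unset Strict Implicit.

Local Notation dist := Defs.dist.

HB.instance Definition _ := Monoid.isComLaw.Build R 0%R Rplus
  (fun a b c => esym (Rplus_assoc a b c)) Rplus_comm Rplus_0_l.

Lemma increasing_geq_id (phi : nat -> nat) :
  (forall n, phi n < phi n.+1) -> forall n, n <= phi n.
Proof. by move=> hphi; elim=> // n ih; apply: leq_ltn_trans ih (hphi n). Qed.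

Section EuclideanSpace.

Local Open Scope R_scope.

Variable d : nat.
Implicit Types x y : Rd d.

Lemma dist_ge0 x y : 0 <= dist x y.
Proof. exact: sqrt_pos. Qed.

Lemma Rabs_coord_le_dist x y (c : 'I_d) : Rabs (x c - y c) <= dist x y.
Proof.
rewrite /dist -sqrt_Rsqr_abs /Rsqr; apply: sqrt_le_1_alt.
rewrite (bigD1 c) //= -[X in X <= _]Rplus_0_r; apply: Rplus_le_compat_l.
by apply: (big_ind (fun a => 0 <= a)); [lra | move=> *; lra | move=> i _; apply: Rle_0_sqr].
Qed.

Lemma dist_le_sum_Rabs x y : dist x y <= \big[Rplus/0]_(i < d) Rabs (x i - y i).
Proof.
set s := \big[Rplus/0]_(i < d) Rabs (x i - y i).
have [hsq hs] : \big[Rplus/0]_(i < d) ((x i - y i) * (x i - y i)) <= s ^ 2 /\ 0 <= s.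
  apply: (big_ind2 (fun a b => a <= b ^ 2 /\ 0 <= b)); first lra.
    by move=> a1 b1 a2 b2 [? ?] [? ?]; split; nra.
  by move=> i _; rewrite pow2_abs; split; [simpl; nra | apply: Rabs_pos].
by rewrite /dist -(sqrt_pow2 s hs); apply: sqrt_le_1_alt.
Qed.

Lemma eq_of_dist_lt a b :
  (forall eps, 0 < eps -> exists x, dist x a < eps /\ dist x b < eps) -> a = b.
Proof.
move=> hclose; apply: functional_extensionality => c; apply: Rminus_diag_uniq.
case: (Req_dec (a c - b c) 0) => // hne; exfalso.
have [x [hxa hxb]] : exists x, dist x a < Rabs (a c - b c) / 2 /\ dist x b < Rabs (a c - b c) / 2.
  by apply: hclose; have := Rabs_pos_lt _ hne; lra.
have := Rabs_coord_le_dist x a c; have := Rabs_coord_le_dist x b c.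
have := Rabs_triang (x c - b c) (a c - x c).
rewrite (Rabs_minus_sym (a c)); have -> : x c - b c + (a c - x c) = a c - b c by ring.
lra.
Qed.

Lemma compact_bounded (K : Rd d -> Prop) p :
  Defs.compact K -> exists B, 0 <= B /\ forall y, K y -> dist y p <= B.
Proof.
move=> hc; apply: NNPP => hunb.
have hfar n : exists y, K y /\ INR n < dist y p.
  apply: NNPP => hn; apply: hunb; exists (INR n); split; first exact: pos_INR.
  by move=> y hy; apply: Rnot_lt_le => hlt; apply: hn; exists y.
have [u hu] := functional_choice _ hfar.
have [phi [hphi [l [_ hconv]]]] := hc u (fun n => proj1 (hu n)).
have [n0 hn0] := hconv 1 Rlt_0_1.
pose C := \big[Rplus/0]_(i < d) (1 + Rabs (l i - p i)).
have [n1 hn1] := INR_unbounded C.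
pose n := maxn n0 n1.
have hC : dist (u (phi n)) p <= C.
  apply: Rle_trans (dist_le_sum_Rabs _ _) _.
  apply: (big_ind2 (fun a b => a <= b)); [lra | move=> *; lra | move=> i _].
  have := Rabs_coord_le_dist (u (phi n)) l i; have := hn0 n (leq_maxl _ _).
  have := Rabs_triang (u (phi n) i - l i) (l i - p i).
  have -> : u (phi n) i - l i + (l i - p i) = u (phi n) i - p i by ring.
  lra.
have hphin : INR n1 <= INR (phi n).
  by apply/le_INR/ssrnat.leP; apply: leq_trans (leq_maxr n0 n1) (increasing_geq_id hphi n).
have := proj2 (hu (phi n)); lra.
Qed.

Lemma similitude_dist_le (f : Rd d -> Rd d) x y :
  contracting_similitude f -> dist (f x) (f y) <= dist x y.
Proof. by case=> r [hr ->]; have := dist_ge0 x y; nra. Qed.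

End EuclideanSpace.

Lemma pow_mul_lt_eventually (r B eps : R) : (0 < r < 1 -> 0 <= B -> 0 < eps ->
  exists n0, forall n, (n0 <= n)%N -> r ^ n * B < eps)%R.
Proof.
move=> hr hB heps.
have [n0 hn0] : exists n0, forall n, (n >= n0)%coq_nat -> (Rabs (r ^ n) < eps / (B + 1))%R.
  by apply: pow_lt_1_zero; [rewrite Rabs_right; lra | apply: Rdiv_lt_0_compat; lra].
exists n0 => n /ssrnat.leP /hn0.
have hrn : (0 <= r ^ n)%R by apply: pow_le; lra.
rewrite Rabs_right; last lra.
move=> h; suff : (r ^ n * (B + 1) < eps)%R by nra.
have := Rmult_lt_compat_r (B + 1) _ _ (ltac:(lra) : (0 < B + 1)%R) h.
by rewrite /Rdiv Rmult_assoc Rinv_l; lra.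
Qed.

Section Words.

Variable N : nat.

Lemma lexlt_nseq_max k h :
  all (fun i => i < N) h -> size h = k -> ~~ lexlt (nseq k N.-1) h.
Proof.
elim: h k => [|c h IH] [|k] //= /andP[hc hh] [hs].
rewrite negb_or -leqNgt -ltnS (ltn_predK hc) hc /=.
by rewrite negb_and (IH k hh hs) orbT.
Qed.

Lemma lexlt_nseq_min k h : size h = k -> ~~ lexlt h (nseq k 0).
Proof.
elim: h k => [|c h IH] [|k] //= [hs].
by rewrite negb_and (IH k hs) orbT.
Qed.

Lemma lexlt_nseq_max_neq k h :
  all (fun i => i < N) h -> size h = k -> h <> nseq k N.-1 -> lexlt h (nseq k N.-1).
Proof.
elim: h k => [|c h IH] [|k] //= /andP[hc hh] [hs] hne.
case: ltngtP => //= [hgt|hcN]; first by rewrite ltnNge -ltnS (ltn_predK hc) hc in hgt.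
by apply: IH => // e; apply: hne; rewrite hcN e.
Qed.

Lemma lexlt_nseq_min_neq k h : size h = k -> h <> nseq k 0 -> lexlt (nseq k 0) h.
Proof.
elim: h k => [|[|c] h IH] [|k] //= [hs] hne.
by apply: IH => // e; apply: hne; rewrite e.
Qed.

Lemma adjacent_nseq i k :
  i.+1 < N -> adjacent N k.+1 (i :: nseq k N.-1) (i.+1 :: nseq k 0).
Proof.
move=> hi; have hN : 0 < N by apply: leq_ltn_trans hi.
have hNm : N.-1 < N by rewrite prednK.
split; [|split; [|split]].
- by split; rewrite /= ?size_nseq // (ltnW hi) all_nseq hNm orbT.
- by split; rewrite /= ?size_nseq // hi all_nseq hN orbT.
- by rewrite /= ltnSn.
- move=> [[|c h] [[hs hh] [h1 h2]]] //=; move: hs hh h1 h2 => /= [hs] /andP[hc hh] h1 h2.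
  case/orP: h1 => [h1 | /andP[_ h1]]; last by move: h1; apply/negP; exact: lexlt_nseq_max.
  case/orP: h2 => [h2 | /andP[_ h2]]; last by move: h2; apply/negP; exact: lexlt_nseq_min.
  by move: (leq_trans h1 h2); rewrite ltnn.
Qed.

Lemma adjacent_cons m a w g :
  adjacent N m.+1 (a :: w) (a :: g) -> adjacent N m w g.
Proof.
move=> [[[hsw] /= /andP[ha hw]] [[[hsg] /= /andP[_ hg]] [hwg hno]]].
split; [by [] | split; [by [] | split]].
- by move: hwg; rewrite /= ltnn eqxx.
- move=> [h [[hs hh] [h1 h2]]]; apply: hno; exists (a :: h).
  by rewrite /= ltnn eqxx h1 h2 /word /= hs ha hh.
Qed.

Lemma adjacent_head_lt k a b w g :
  adjacent N k.+1 (a :: w) (b :: g) -> a < b ->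
  [/\ b = a.+1, w = nseq k N.-1 & g = nseq k 0].
Proof.
move=> [[[hsw] /= /andP[ha hw]] [[[hsg] /= /andP[hb hg]] [_ hno]]] hab.
have hN : 0 < N by apply: leq_ltn_trans ha.
split.
- apply/eqP; rewrite eqn_leq hab andbT leqNgt; apply/negP => hlt.
  apply: hno; exists (a.+1 :: w).
  by rewrite /word /= hsw (ltn_trans hlt hb) hw ltnSn hlt.
- apply: NNPP => hne; apply: hno; exists (a :: nseq k N.-1).
  have hNm : N.-1 < N by rewrite prednK.
  split; first by rewrite /word /= size_nseq ha all_nseq hNm orbT.
  by rewrite /= ltnn eqxx hab lexlt_nseq_max_neq.
- apply: NNPP => hne; apply: hno; exists (b :: nseq k 0).
  split; first by rewrite /word /= size_nseq hb all_nseq hN orbT.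
  by rewrite /= ltnn eqxx hab lexlt_nseq_min_neq.
Qed.

Lemma adjacent_shape m w g :
  adjacent N m w g ->
  exists u i k, [/\ i.+1 < N, w = u ++ i :: nseq k N.-1 & g = u ++ i.+1 :: nseq k 0].
Proof.
elim: w m g => [|a w IH] [|m] [|b g] hadj;
  try by case: hadj => [[? _] [[? _] []]].
have hlt := hadj.2.2.1; case/orP: hlt => [hab | /andP[/eqP hab _]].
- have [hb hw hg] := adjacent_head_lt hadj hab.
  exists [::], a, m; rewrite hb hw hg; split => //.
  by rewrite -hb; case: hadj => _ [[_ /= /andP[]]].
- rewrite -{}hab in hadj *.
  have [u [i [k [hi hw hg]]]] := IH _ _ (adjacent_cons hadj).
  by exists (a :: u), i, k; rewrite hw hg.
Qed.

End Words.

Section IteratedFunctionSystem.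

Local Open Scope R_scope.

Variables (d N : nat) (S : nat -> Rd d -> Rd d) (K : Rd d -> Prop).
Hypothesis hK : invariant_set N S K.

Lemma Sw_cat u v x : Sw S (u ++ v) x = Sw S u (Sw S v x).
Proof. by elim: u => //= a u ->. Qed.

Lemma Sw_nseq_fix j p k : S j p = p -> Sw S (nseq k j) p = p.
Proof. by move=> hp; elim: k => //= k ->. Qed.

Lemma dist_Sw_nseq_fix j p r y k :
  (forall x y, dist (S j x) (S j y) = r * dist x y) -> S j p = p ->
  dist (Sw S (nseq k j) y) p = r ^ k * dist y p.
Proof.
move=> hr hp; elim: k => [|k IH] /=; first ring.
by rewrite -[in dist _ p]hp hr IH; ring.
Qed.

Lemma Sw_nseq_in_K j y k : (j < N)%N -> K y -> K (Sw S (nseq k j) y).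
Proof.
case: hK => _ [_ hKS] hj hy; elim: k => //= k IH.
by apply/hKS; exists j; split => //; exists (Sw S (nseq k j) y).
Qed.

Lemma Sw_nseq_fix_uniformly_close j p :
  contracting_similitude (S j) -> S j p = p ->
  forall eps, 0 < eps -> exists k0, forall k y, (k0 <= k)%N -> K y ->
    dist (Sw S (nseq k j) y) p < eps.
Proof.
case: hK => _ [hc _] [r [hr hdist]] hp eps heps.
have [B [hB hKB]] := compact_bounded p hc.
have [k0 hk0] := pow_mul_lt_eventually hr hB heps.
exists k0 => k y hk hy; rewrite (dist_Sw_nseq_fix _ _ hdist hp).
have := hKB y hy; have := hk0 k hk; have := dist_ge0 y p.
have : 0 <= r ^ k by apply: pow_le; lra.
nra.
Qed.

Lemma fixpoint_in_K j p :
  (j < N)%N -> contracting_similitude (S j) -> S j p = p -> K p.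
Proof.
move=> hj hSj hp; case: hK => [[y0 hy0] [hc _]].
have [phi [hphi [l [hl hconv]]]] := hc _ (fun n => Sw_nseq_in_K n hj hy0).
suff -> : p = l by [].
apply: eq_of_dist_lt => eps heps.
have [n0 hn0] := hconv eps heps.
have [k0 hk0] := Sw_nseq_fix_uniformly_close hSj hp heps.
exists (Sw S (nseq (phi (maxn n0 k0)) j) y0); split; last exact/hn0/leq_maxl.
by apply: hk0 hy0; apply: leq_trans (leq_maxr n0 k0) (increasing_geq_id hphi _).
Qed.

Hypothesis hS : forall i, (i < N)%N -> contracting_similitude (S i).
Variables p1 pN : Rd d.
Hypotheses (hp1 : S 0%N p1 = p1) (hpN : S N.-1 pN = pN).

Lemma linear_IFS_fixpoints_glue :
  linear_IFS N S K -> forall i, (i.+1 < N)%N -> S i.+1 p1 = S i pN.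
Proof.
move=> hlin i hi.
have hN : (0 < N)%N by apply: leq_ltn_trans hi.
have hNm : (N.-1 < N)%N by rewrite prednK.
apply: eq_of_dist_lt => eps heps.
have [k0 hk0] := Sw_nseq_fix_uniformly_close (hS hN) hp1 heps.
have [k1 hk1] := Sw_nseq_fix_uniformly_close (hS hNm) hpN heps.
have [x [[y [hy hxy]] [z [hz hxz]]]] :=
  hlin (maxn k0 k1).+1 isT _ _ (adjacent_nseq (maxn k0 k1) hi).
exists x; split.
- rewrite hxz; apply: Rle_lt_trans (similitude_dist_le _ _ (hS hi)) _.
  exact/hk0/hz/leq_maxl.
- rewrite hxy; apply: Rle_lt_trans (similitude_dist_le _ _ (hS (ltnW hi))) _.
  exact/hk1/hy/leq_maxr.
Qed.

Lemma fixpoints_glue_linear_IFS :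
  (forall i, (i.+1 < N)%N -> S i.+1 p1 = S i pN) -> linear_IFS N S K.
Proof.
move=> hglue m _ w g hwg.
have [u [i [k [hi -> ->]]]] := adjacent_shape hwg.
have hN : (0 < N)%N by apply: leq_ltn_trans hi.
have hNm : (N.-1 < N)%N by rewrite prednK.
exists (Sw S (u ++ i :: nseq k N.-1) pN); split.
  by exists pN; split => //; apply: (fixpoint_in_K hNm (hS hNm) hpN).
exists p1; split; first exact: (fixpoint_in_K hN (hS hN) hp1).
by rewrite !Sw_cat /= !Sw_nseq_fix // hglue.
Qed.

End IteratedFunctionSystem.

Theorem corollary4p2 (d N : nat) (S : nat -> Rd d -> Rd d) (K : Rd d -> Prop)
  (hN : (0 < N)%N)
  (hS : forall i, (i < N)%N -> contracting_similitude (S i))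
  (hK : invariant_set N S K)
  (p1 pN : Rd d) (hp1 : S 0%N p1 = p1) (hpN : S N.-1 pN = pN) :
  linear_IFS N S K <->
  (forall i : nat, (i.+1 < N)%N -> S i.+1 p1 = S i pN).
Proof.
split; [exact: linear_IFS_fixpoints_glue | exact: fixpoints_glue_linear_IFS].
Qed.
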